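(* Let $a_n=1+3\binom{n+1}{2}$ ($n\ge0$) be the centered triangular numbers, with generating function $\frac{1+x+x^2}{(1-x)^3}$, let $b_n$ be the revert transform of $(a_n)$, and let $h_n=\det(b_{i+j})_{0\le i,j\le n}$ be its Hankel transform. Then for all $n\ge0$, $$\frac{h_n}{3^{\binom{n+1}{2}}}=A_{n+1},$$ where $A_m=\prod_{k=0}^{m-1}\frac{(3k+1)!}{(m+k)!}$ are the Robbins numbers.
   Context: For a power series $g(x)$ with $g(0)\ne0$, its revert transform is the sequence with generating function $\frac1x\mathrm{Rev}(xg(x))$, where $\mathrm{Rev}(f)$ is the compositional inverse of $f$ (the series $u$ with $f(u(x))=x$, $u(0)=0$). The Hankel transform of $(b_n)$ is $h_n=\det(b_{i+j})_{0\le i,j\le n}$. The Robbins numbers are $A_m=\prod_{k=0}^{m-1}\frac{(3k+1)!}{(m+k)!}$. *)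

(* Formal power series over rat are represented by their
   coefficient sequences nat -> rat. *)
From mathcomp Require Import all_boot all_order all_algebra.
Set Implicit Arguments. Unset Strict Implicit. Unset Printing Implicit Defensive.
Import Order.TTheory GRing.Theory Num.Theory.
Local Open Scope ring_scope.

Definition smul (f g : nat -> rat) : nat -> rat :=
  fun n => \sum_(i < n.+1) f i * g (n - i)%N.

Fixpoint spow (u : nat -> rat) (k : nat) : nat -> rat :=
  match k with
  | 0 => fun n => if n == 0%N then 1 else 0
  | k'.+1 => smul u (spow u k')
  end.

(* Coefficients of the composition f(u(x)), for u with u(0) = 0:
   [x^n] f(u) = sum_{k<=n} f_k [x^n] u^k. *)
Definition scomp (f u : nat -> rat) : nat -> rat :=
  fun n => \sum_(k < n.+1) f k * spow u k n.

Definition xtimes (g : nat -> rat) : nat -> rat :=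
  fun n => if n is n'.+1 then g n' else 0.

(* b is the revert transform of g: b has generating function
   (1/x) Rev(x g(x)), i.e. u := x b(x) satisfies u(0) = 0 and
   (x g)(u(x)) = x. *)
Definition is_revert (g b : nat -> rat) : Prop :=
  forall n, scomp (xtimes g) (xtimes b) n = (if n == 1%N then 1 else 0).

Definition ctri (n : nat) : rat := 1 + 3 * ('C(n.+1, 2))%:R.

Definition hankel (b : nat -> rat) (n : nat) : rat :=
  \det (\matrix_(i < n.+1, j < n.+1) b (i + j)%N).

Definition robbins (m : nat) : rat :=
  \prod_(k < m) (((3 * k).+1)`!%:R / ((m + k)`!)%:R).

From HB Require Import structures.
From mathcomp Require Import all_boot all_order all_algebra.
From mathcomp Require Import boolp.
From mathcomp Require Import ring lra zify.
Set Implicit Arguments. Unset Strict Implicit. Unset Printing Implicit Defensive.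
Import Order.TTheory GRing.Theory Num.Theory.
Local Open Scope ring_scope.

(* Write u = x b.  The centred triangular numbers have generating function
   (1 + x + x^2)/(1 - x)^3, so b is their revert transform iff
   (1 - u)^3 = b (1 + u + u^2).  This cubic has exactly one power-series
   solution, b = crt / (1 + x crt), where 1 + 3 x crt(x) = (1 + 9 x)^(1/3).
   A relation b (1 + x f) = f gives T(1 - x b) H(f) = H(b) T(1 + x f)^T with
   unitriangular Toeplitz matrices T, so b and crt have the same Hankel
   determinants.  For the hypergeometric moments crt these are computed with
   explicit orthogonal polynomials: if Q is the lower-triangular matrix of
   their coefficients, Q H(crt) is upper triangular (a recurrence in the
   degree k, certified by a WZ pair) with k-th diagonal entry
   3^k (A_(k+1) / A_k) Q_kk. *)

(** * Formal power series *)

Definition fps (R : Type) : Type := nat -> R.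

HB.instance Definition _ (R : Type) := gen_eqMixin (fps R).
HB.instance Definition _ (R : Type) := gen_choiceMixin (fps R).

Section FpsZmodule.
Variable R : zmodType.
Implicit Types f g h : fps R.

Definition fps_add f g : fps R := fun n => f n + g n.
Definition fps_opp f : fps R := fun n => - f n.
Definition fps_zero : fps R := fun=> 0.

Lemma fps_addA : associative fps_add.
Proof. by move=> f g h; apply: funext => n; rewrite /fps_add addrA. Qed.
Lemma fps_addC : commutative fps_add.
Proof. by move=> f g; apply: funext => n; rewrite /fps_add addrC. Qed.
Lemma fps_add0 : left_id fps_zero fps_add.
Proof. by move=> f; apply: funext => n; rewrite /fps_add add0r. Qed.
Lemma fps_addN : left_inverse fps_zero fps_opp fps_add.
Proof. by move=> f; apply: funext => n; rewrite /fps_add /fps_opp addNr. Qed.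

HB.instance Definition _ := GRing.isZmodule.Build (fps R) fps_addA fps_addC fps_add0 fps_addN.

Lemma fps_coefD f g n : (f + g) n = f n + g n. Proof. by []. Qed.
Lemma fps_coefN f n : (- f) n = - f n. Proof. by []. Qed.
Lemma fps_coefB f g n : (f - g) n = f n - g n. Proof. by []. Qed.
Lemma fps_coefMn f m n : (f *+ m) n = f n *+ m.
Proof. by elim: m => [|m IH] //; rewrite !mulrS fps_coefD IH. Qed.

End FpsZmodule.

Section FpsRing.
Variable R : comNzRingType.
Implicit Types f g h u : fps R.

Definition fps_mul f g : fps R := fun n => \sum_(i < n.+1) f i * g (n - i)%N.
Definition fps_one : fps R := fun n => (n == 0%N)%:R.

Definition fps_trunc n f : {poly R} := \poly_(i < n.+1) f i.

Lemma coef_fps_trunc n f i : (i <= n)%N -> (fps_trunc n f)`_i = f i.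
Proof. by move=> le_in; rewrite coef_poly ltnS le_in. Qed.

(* Coefficients up to [n] of a product only depend on the truncations at [n],
   so the ring laws are inherited from [{poly R}]. *)
Lemma fps_mul_trunc m n f g : (m <= n)%N -> fps_mul f g m = (fps_trunc n f * fps_trunc n g)`_m.
Proof.
move=> le_mn; rewrite coefM; apply: eq_bigr => -[i /= lt_im] _.
by rewrite !coef_fps_trunc //; lia.
Qed.

Lemma fps_mulA : associative fps_mul.
Proof.
move=> f g h; apply: funext => n.
transitivity (fps_trunc n f * (fps_trunc n g * fps_trunc n h))`_n.
  rewrite coefM; apply: eq_bigr => -[i /= lt_in] _.
  by rewrite coef_fps_trunc -?fps_mul_trunc ?leq_subr //; lia.
rewrite mulrA coefM; apply: eq_bigr => -[i /= lt_in] _.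
by rewrite (coef_fps_trunc _ (leq_subr i n)) -fps_mul_trunc //; lia.
Qed.

Lemma fps_mulC : commutative fps_mul.
Proof.
by move=> f g; apply: funext => n; rewrite (fps_mul_trunc _ _ (leqnn n)) mulrC -fps_mul_trunc.
Qed.

Lemma fps_mul1 : left_id fps_one fps_mul.
Proof.
move=> f; apply: funext => n; rewrite /fps_mul big_ord_recl /= mul1r subn0.
by rewrite big1 ?addr0 // => i _; rewrite mul0r.
Qed.

Lemma fps_mulDl : left_distributive fps_mul +%R.
Proof.
move=> f g h; apply: funext => n; rewrite /fps_mul fps_coefD -big_split /=.
by apply: eq_bigr => i _; rewrite mulrDl.
Qed.

Lemma fps_one_neq0 : fps_one != 0.
Proof. by apply/eqP => /(congr1 (fun f => f 0%N)) /eqP; rewrite oner_eq0. Qed.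

HB.instance Definition _ :=
  GRing.Zmodule_isComNzRing.Build (fps R) fps_mulA fps_mulC fps_mul1 fps_mulDl fps_one_neq0.

Lemma fps_coefM f g n : (f * g) n = \sum_(i < n.+1) f i * g (n - i)%N. Proof. by []. Qed.
Lemma fps_coef1 n : (1 : fps R) n = (n == 0%N)%:R. Proof. by []. Qed.

Lemma fps_coef0M f g : (f * g) 0%N = f 0%N * g 0%N.
Proof. by rewrite fps_coefM big_ord1. Qed.

Definition fpsX : fps R := fun n => (n == 1%N)%:R.

Lemma fps_coefXM f n : (fpsX * f) n = if n is n'.+1 then f n' else 0.
Proof.
rewrite fps_coefM big_ord_recl /= mul0r add0r; case: n => [|n]; first by rewrite big_ord0.
rewrite big_ord_recl /= mul1r subn1 big1 ?addr0 // => i _.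
by rewrite /fpsX /bump /= mul0r.
Qed.

Lemma fps_mulXI : injective (fun f => fpsX * f).
Proof.
move=> f g eq_fg; apply: funext => n.
by have := congr1 (fun h => h n.+1) eq_fg; rewrite !fps_coefXM.
Qed.

Lemma fps_coef_expr_small u k m : u 0%N = 0 -> (m < k)%N -> (u ^+ k) m = 0.
Proof.
move=> u0; elim: k m => [//|k IH] m lt_mk.
rewrite exprS fps_coefM big1 // => -[[|i] lt_im] _; first by rewrite u0 mul0r.
by rewrite IH ?mulr0 //=; lia.
Qed.

Lemma fps_mul_1addX_eq0 f g : f * (1 + fpsX * g) = 0 -> f = 0.
Proof.
rewrite mulrDr mulr1 => /eqP; rewrite addr_eq0 => /eqP ef.
suff f_eq0 n m : (m <= n)%N -> f m = 0 by apply: funext => n; exact: (f_eq0 n).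
elim: n m => [|n IH] [|m] le_mn; rewrite ef mulrCA fps_coefN fps_coefXM ?oppr0 //.
rewrite fps_coefM big1 ?oppr0 // => -[i /= lt_im] _.
by rewrite IH ?mul0r //; lia.
Qed.

(* The composition [f(u(x))]; truncating the sum at [k <= n] is only correct when [u 0 = 0]. *)
Definition fps_comp u f : fps R := fun n => \sum_(k < n.+1) f k * (u ^+ k) n.

Lemma fps_comp_is_zmod_morphism u : zmod_morphism (fps_comp u).
Proof.
move=> f g; apply: funext => n; rewrite fps_coefB /fps_comp -sumrB.
by apply: eq_bigr => k _; rewrite mulrBl.
Qed.

HB.instance Definition _ u :=
  GRing.isZmodMorphism.Build (fps R) (fps R) (fps_comp u) (fps_comp_is_zmod_morphism u).

Lemma fps_compD u : {morph fps_comp u : f g / f + g}. Proof. exact: raddfD. Qed.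
Lemma fps_compN u : {morph fps_comp u : f / - f}. Proof. exact: raddfN. Qed.
Lemma fps_compMn u m : {morph fps_comp u : f / f *+ m}. Proof. exact: raddfMn. Qed.

Lemma fps_comp1 u : fps_comp u 1 = 1.
Proof.
apply: funext => n; rewrite /fps_comp big_ord_recl /= mul1r.
by rewrite big1 ?addr0 // => k _; rewrite mul0r.
Qed.

Lemma fps_compXM u f : u 0%N = 0 -> fps_comp u (fpsX * f) = u * fps_comp u f.
Proof.
move=> u0; apply: funext => n.
transitivity (\sum_(k < n.+1) f k * (u ^+ k.+1) n).
  rewrite /fps_comp big_ord_recl fps_coefXM mul0r add0r.
  rewrite [RHS]big_ord_recr /= (fps_coef_expr_small u0 (ltnSn n)) mulr0 addr0.
  by apply: eq_bigr => k _; rewrite fps_coefXM.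
under eq_bigr do rewrite exprS fps_coefM mulr_sumr.
rewrite exchange_big fps_coefM; apply: eq_bigr => -[i /= lt_in] _.
rewrite /fps_comp mulr_sumr (big_ord_widen_cond n.+1 xpredT
  (fun k : nat => u i * (f k * (u ^+ k) (n - i)%N))) ?ltnS ?leq_subr //.
rewrite [RHS]big_mkcond; apply: eq_bigr => -[k /= lt_kn] _.
case: ifP => le_k; first by rewrite mulrCA.
by rewrite (@fps_coef_expr_small u k (n - i)) ?mulr0 //; lia.
Qed.

Definition fps_geom : fps R := fun=> 1.

Lemma fps_geom_mul_1sub u : u 0%N = 0 -> fps_comp u fps_geom * (1 - u) = 1.
Proof.
move=> u0; have geomE : fps_geom = 1 + fpsX * fps_geom.
  by apply: funext => -[|n]; rewrite fps_coefD fps_coefXM fps_coef1 ?addr0 ?add0r.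
have := congr1 (fps_comp u) geomE; rewrite fps_compD fps_comp1 fps_compXM // => geom_fix.
by rewrite mulrBr mulr1 {1}geom_fix; ring.
Qed.

Definition fps_deriv f : fps R := fun n => f n.+1 *+ n.+1.

Lemma fps_coef_deriv f n : fps_deriv f n = f n.+1 *+ n.+1. Proof. by []. Qed.

Lemma fps_deriv_is_zmod_morphism : zmod_morphism fps_deriv.
Proof. by move=> f g; apply: funext => n; rewrite /fps_deriv !fps_coefB mulrnBl. Qed.

HB.instance Definition _ :=
  GRing.isZmodMorphism.Build (fps R) (fps R) fps_deriv fps_deriv_is_zmod_morphism.

Lemma fps_derivD : {morph fps_deriv : f g / f + g}. Proof. exact: raddfD. Qed.
Lemma fps_derivB : {morph fps_deriv : f g / f - g}. Proof. exact: raddfB. Qed.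
Lemma fps_derivMn m : {morph fps_deriv : f / f *+ m}. Proof. exact: raddfMn. Qed.

Lemma fps_deriv1 : fps_deriv 1 = 0.
Proof. by apply: funext => n; rewrite /fps_deriv fps_coef1 mul0rn. Qed.

Lemma fps_derivX : fps_deriv fpsX = 1.
Proof. by apply: funext => -[|n]; rewrite fps_coef1 /fps_deriv /fpsX /= ?mul0rn. Qed.

Lemma fps_derivM f g : fps_deriv (f * g) = fps_deriv f * g + f * fps_deriv g.
Proof.
apply: funext => n; rewrite /fps_deriv [(f * g) _](fps_mul_trunc _ _ (leqnn n.+1)).
rewrite -coef_deriv derivM.
rewrite coefD !coefM fps_coefD !fps_coefM.
by congr (_ + _); apply: eq_bigr => -[i /= lt_in] _; rewrite coef_deriv !coef_fps_trunc //; lia.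
Qed.

Definition hankel_mx f n : 'M[R]_n.+1 := \matrix_(i, j) f (i + j)%N.

Definition toeplitz_lower g n : 'M[R]_n.+1 :=
  \matrix_(i, k) if (k <= i)%N then g (i - k)%N else 0.

Lemma det_toeplitz_lower g n : g 0%N = 1 -> \det (toeplitz_lower g n) = 1.
Proof.
move=> g0; rewrite det_trig; first by rewrite big1 // => i _; rewrite mxE leqnn subnn.
by apply/is_trig_mxP => i k lt_ik; rewrite mxE leqNgt lt_ik.
Qed.

Lemma mulmx_toeplitz_lower_coef g (F : nat -> R) n (i : 'I_n.+1) :
  \sum_(k < n.+1) (if (k <= i)%N then g (i - k)%N else 0) * F k =
  \sum_(k < i.+1) g (i - k)%N * F k.
Proof.
rewrite (big_ord_widen n.+1 (fun k => g (i - k)%N * F k) (ltn_ord i)) [RHS]big_mkcond.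
by apply: eq_bigr => k _; rewrite ltnS; case: ifP; rewrite ?mul0r.
Qed.

Lemma fps_coef_1addXM f m : (1 + fpsX * f) m = if m is m'.+1 then f m' else 1.
Proof. by rewrite fps_coefD fps_coefXM fps_coef1; case: m => [|m]; rewrite ?addr0 ?add0r. Qed.

Lemma fps_coef_1subXM f m : (1 - fpsX * f) m = if m is m'.+1 then - f m' else 1.
Proof. by rewrite fps_coefB fps_coefXM fps_coef1; case: m => [|m]; rewrite ?subr0 ?sub0r. Qed.

Lemma fps_coef_mul_1addX b f m : b * (1 + fpsX * f) = f ->
  f m = b m + \sum_(r < m) b r * f (m.-1 - r)%N.
Proof.
move=> eq_f; rewrite -{1}eq_f mulrDr mulr1 fps_coefD mulrCA fps_coefXM.
by case: m => [|m]; rewrite ?big_ord0.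
Qed.

Lemma hankel_shift_coef b f i j : b * (1 + fpsX * f) = f ->
  \sum_(k < i.+1) (1 - fpsX * b) (i - k)%N * f (k + j)%N =
  \sum_(l < j.+1) b (i + l)%N * (1 + fpsX * f) (j - l)%N.
Proof.
move=> eq_f; rewrite big_ord_recr big_ord_recr /= !subnn.
rewrite fps_coef_1subXM fps_coef_1addXM mul1r mulr1.
have -> : \sum_(k < i) (1 - fpsX * b) (i - k)%N * f (k + j)%N =
          - \sum_(r < i) b r * f ((i + j).-1 - r)%N.
  rewrite (reindex_inj rev_ord_inj) -sumrN; apply: eq_bigr => -[k /= lt_ki] _.
  have [-> ->] : (i - (i - k.+1) = k.+1 /\ i - k.+1 + j = (i + j).-1 - k)%N by lia.
  by rewrite fps_coef_1subXM mulNr.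
have -> : \sum_(l < j) b (i + l)%N * (1 + fpsX * f) (j - l)%N =
          \sum_(l < j) b (i + l)%N * f ((i + j).-1 - (i + l))%N.
  apply: eq_bigr => -[l /= lt_lj] _.
  have [-> ->] : (j - l = (j - l.+1).+1 /\ (i + j).-1 - (i + l) = j - l.+1)%N by lia.
  by rewrite fps_coef_1addXM.
by rewrite (fps_coef_mul_1addX _ eq_f) big_split_ord /=; ring.
Qed.

Lemma det_hankel_mx_invariant b f n : b * (1 + fpsX * f) = f ->
  \det (hankel_mx b n) = \det (hankel_mx f n).
Proof.
move=> eq_f.
have eq_mx : toeplitz_lower (1 - fpsX * b) n *m hankel_mx f n =
             hankel_mx b n *m (toeplitz_lower (1 + fpsX * f) n)^T.
  apply/matrixP => i j; rewrite !mxE.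
  under eq_bigr do rewrite !mxE.
  under [RHS]eq_bigr do rewrite !mxE mulrC.
  rewrite (mulmx_toeplitz_lower_coef _ (fun k => f (k + j)%N)).
  rewrite (mulmx_toeplitz_lower_coef _ (fun k => b (i + k)%N)) hankel_shift_coef //.
  by apply: eq_bigr => k _; rewrite mulrC.
have := congr1 determinant eq_mx.
by rewrite !det_mulmx det_tr !det_toeplitz_lower ?fps_coef_1addXM ?fps_coef_1subXM ?mul1r ?mulr1.
Qed.

End FpsRing.

Arguments fpsX {R}.
Arguments fps_geom {R}.

(** * The revert transform of the centred triangular numbers *)

Lemma spowE (u : fps rat) k : spow u k = u ^+ k.
Proof.
elim: k => [|k IH]; last by rewrite exprS -IH.
by apply: funext => n; rewrite expr0 fps_coef1 /=; case: (n == 0%N).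
Qed.

Lemma is_revertE (g b : fps rat) :
  is_revert g b <-> fps_comp (fpsX * b) (fpsX * g) = fpsX.
Proof.
have xtimesE (f : fps rat) : xtimes f = fpsX * f by apply: funext => n; rewrite fps_coefXM.
have scompE n : scomp (xtimes g) (xtimes b) n = fps_comp (fpsX * b) (fpsX * g) n.
  by apply: eq_bigr => k _; rewrite spowE !xtimesE.
split=> [rev_b | comp_b n]; first apply: funext => n.
  by rewrite -scompE rev_b /fpsX; case: (n == 1%N).
by rewrite scompE comp_b /fpsX; case: (n == 1%N).
Qed.

Lemma ctri_gf : (ctri : fps rat) * (1 - fpsX) ^+ 3 = 1 + fpsX + fpsX ^+ 2.
Proof.
have ctriS n : ctri n.+1 = ctri n + 3 * n.+1%:R by rewrite /ctri binS bin1 natrD; ring.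
set a : fps rat := ctri.
have -> : a * (1 - fpsX) ^+ 3 =
    a - fpsX * (a *+ 3) + fpsX * (fpsX * (a *+ 3)) - fpsX * (fpsX * (fpsX * a)) by ring.
rewrite expr2; apply: funext => -[|[|[|n]]].
all: rewrite !(fps_coefB, fps_coefD, fps_coefN, fps_coefXM, fps_coefMn, fps_coef1) /a.
all: rewrite ?ctriS /ctri ?(@bin_small 1 2) //= /fpsX /=; ring.
Qed.

Lemma fps_comp_ctri (u : fps rat) : u 0%N = 0 ->
  fps_comp u ctri * (1 - u) ^+ 3 = 1 + u + u ^+ 2.
Proof.
move=> u0; set a : fps rat := ctri; set K := fps_comp u a.
have horner : a = 1 + fpsX * (1 + a *+ 3 + fpsX * (1 - a *+ 3 + fpsX * a)).
  apply/eqP; rewrite -subr_eq0; apply/eqP.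
  by transitivity (a * (1 - fpsX) ^+ 3 - (1 + fpsX + fpsX ^+ 2)); [ring | rewrite ctri_gf subrr].
have : K = 1 + u * (1 + K *+ 3 + u * (1 - K *+ 3 + u * K)).
  clearbody a; rewrite {1}/K {1}horner.
  by rewrite !(fps_compD, fps_compN, fps_compMn, fps_compXM, fps_comp1) // -/K; ring.
move=> K_fix; transitivity (K - u * (K *+ 3 - u * (K *+ 3 - u * K))); first ring.
by rewrite {1}K_fix; ring.
Qed.

Definition ctri_revert_cubic (b : fps rat) : Prop :=
  (1 - fpsX * b) ^+ 3 = b * (1 + fpsX * b + (fpsX * b) ^+ 2).

Lemma is_revert_ctriP (b : fps rat) : is_revert ctri b <-> ctri_revert_cubic b.
Proof.
set u := fpsX * b; have u0 : u 0%N = 0 by rewrite /u fps_coefXM.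
have hK := fps_comp_ctri u0; set K := fps_comp u ctri in hK *.
rewrite is_revertE fps_compXM // /ctri_revert_cubic -/u.
have bK1 : b * K = 1 <-> u * K = fpsX.
  split=> [bK | uK]; first by rewrite /u -mulrA bK mulr1.
  by apply: fps_mulXI; rewrite /= mulr1 mulrA.
rewrite -bK1; split=> [bK | cubic].
  by rewrite -[LHS]mul1r -{1}bK -mulrA hK.
apply/eqP; rewrite -subr_eq0; apply/eqP.
apply: (@fps_mul_1addX_eq0 _ _ (b * (u * 3%:R - u ^+ 2 - 3%:R))).
have -> : 1 + fpsX * (b * (u * 3%:R - u ^+ 2 - 3%:R)) = (1 - u) ^+ 3 by rewrite /u; ring.
by rewrite mulrBl -mulrA hK cubic mul1r; ring.
Qed.

(** * The cube-root series *)

Lemma fps_ode_uniq (m : nat) (y : fps rat) :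
  (1 + fpsX *+ m) * fps_deriv y = y *+ m -> y 0%N = 0 -> y = 0.
Proof.
rewrite mulrDl mul1r mulrnAl => ode y0; apply: funext; elim=> [//|n IH].
have := congr1 (fun f => f n) ode.
rewrite fps_coefD !fps_coefMn fps_coefXM !fps_coef_deriv IH mul0rn.
case: n IH => [|n] IH; first by rewrite mul0rn addr0 mulr1n.
by rewrite fps_coef_deriv IH !mul0rn addr0 => /eqP; rewrite mulrn_eq0 => /eqP.
Qed.

Definition prod3 (r k : nat) : rat := \prod_(l < k) (3 * l + r)%:R.

Lemma prod3S r k : prod3 r k.+1 = prod3 r k * (3 * k + r)%:R.
Proof. by rewrite /prod3 big_ord_recr. Qed.

Lemma prod3_neq0 r k : (0 < r)%N -> prod3 r k != 0.
Proof.
by move=> r_gt0; rewrite prodf_seq_neq0; apply/allP => l _; rewrite pnatr_eq0; lia.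
Qed.

Lemma natr_fact_neq0 n : n`!%:R != 0 :> rat.
Proof. by rewrite pnatr_eq0 -lt0n fact_gt0. Qed.

Ltac field_side_neq0 :=
  repeat (apply/andP; split);
  first [ by apply: lt0r_neq0; lra | exact: natr_fact_neq0 | by apply: prod3_neq0
        | by rewrite expf_neq0 | assumption ].

Definition crt : fps rat := fun n => (-3) ^+ n * prod3 2 n / n.+1`!%:R.

Lemma crt0 : crt 0%N = 1.
Proof. by rewrite /crt /prod3 big_ord0 divr1 mulr1. Qed.

Lemma crtS n : crt n.+1 = - (3 * (3 * n + 2)%:R) * crt n / n.+2%:R.
Proof.
rewrite /crt prod3S exprS factS natrM.
by have := ler0n rat n => ?; field; field_side_neq0.
Qed.

Lemma crt_ode :
  (1 + fpsX *+ 9) * fps_deriv (1 + fpsX * crt *+ 3) = (1 + fpsX * crt *+ 3) *+ 3.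
Proof.
rewrite mulrDl mul1r mulrnAl; apply: funext => -[|n];
  rewrite fps_coefD fps_coefMn fps_coefXM !fps_coef_deriv /=;
  rewrite !(fps_coefD, fps_coefMn, fps_coefXM, fps_coef1) /=.
  by rewrite crt0; ring.
by rewrite crtS; have := ler0n rat n => ?; field; field_side_neq0.
Qed.

Lemma crt_cube_root : (1 + fpsX * crt *+ 3) ^+ 3 = 1 + fpsX *+ 9.
Proof.
set w := 1 + fpsX * crt *+ 3.
apply/eqP; rewrite -subr_eq0; apply/eqP; apply: (@fps_ode_uniq 9).
  rewrite fps_derivB fps_derivD fps_deriv1 fps_derivMn fps_derivX add0r.
  rewrite exprS expr2 !fps_derivM.
  transitivity (((1 + fpsX *+ 9) * fps_deriv w) * (w * w) *+ 3 - (1 + fpsX *+ 9) *+ 9).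
    by ring.
  by rewrite crt_ode -/w; ring.
rewrite fps_coefB fps_coefD fps_coefMn /fpsX fps_coef1 /= !(exprS, fps_coef0M) expr0.
by rewrite /w fps_coefD fps_coefMn fps_coefXM fps_coef1 /=; ring.
Qed.

Lemma crt_cubic : crt * (1 + fpsX * crt *+ 3 + (fpsX * crt) ^+ 2 *+ 3) = 1.
Proof.
apply/eqP; rewrite -subr_eq0; apply/eqP; apply: funext => n.
have : fpsX * ((crt * (1 + fpsX * crt *+ 3 + (fpsX * crt) ^+ 2 *+ 3) - 1) *+ 9) = fpsX * 0.
  rewrite mulr0; transitivity ((1 + fpsX * crt *+ 3) ^+ 3 - (1 + fpsX *+ 9)); first by ring.
  by rewrite crt_cube_root subrr.
by move=> /fps_mulXI /(congr1 (fun f => f n)) /eqP; rewrite fps_coefMn mulrn_eq0 => /eqP.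
Qed.

Lemma ctri_revert_cubic_crtP (b : fps rat) :
  ctri_revert_cubic b <-> b * (1 + fpsX * crt) = crt.
Proof.
rewrite /ctri_revert_cubic; set p := 1 + fpsX * crt.
pose G (be : fps rat) :=
  (p - fpsX * be) ^+ 3 - be * (p ^+ 2 + fpsX * be * p + fpsX ^+ 2 * be ^+ 2).
have Gb : G (b * p) = ((1 - fpsX * b) ^+ 3 - b * (1 + fpsX * b + (fpsX * b) ^+ 2)) * p ^+ 3.
  by rewrite /G; ring.
have Gcrt : G crt = 0.
  transitivity (1 - crt * (1 + fpsX * crt *+ 3 + (fpsX * crt) ^+ 2 *+ 3)).
    by rewrite /G /p; ring.
  by rewrite crt_cubic subrr.
(* The cofactor of [crt - be] has constant term 1, so [G] is injective. *)
have Gdiff be : G be - G crt = (crt - be) * (1 + fpsX * (crt *+ 2 + fpsX * crt ^+ 2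
    + (p - fpsX * be) ^+ 2 + (p - fpsX * be) * (p - fpsX * crt) + (p - fpsX * crt) ^+ 2
    + (be + crt) * p + fpsX * (be ^+ 2 + be * crt + crt ^+ 2))).
  by rewrite /G /p; ring.
split=> [cubic | bp].
  move: (Gdiff (b * p)); rewrite Gcrt subr0 Gb cubic subrr mul0r.
  by move=> /esym /fps_mul_1addX_eq0 /eqP; rewrite subr_eq0 eq_sym => /eqP.
apply/eqP; rewrite -subr_eq0; apply/eqP.
apply: (@fps_mul_1addX_eq0 _ _ (crt *+ 3 + fpsX * crt ^+ 2 *+ 3 + fpsX ^+ 2 * crt ^+ 3)).
by rewrite -Gcrt -[in RHS]bp Gb /p; congr (_ * _); ring.
Qed.

Lemma is_revert_ctri_crtP (b : fps rat) : is_revert ctri b <-> b * (1 + fpsX * crt) = crt.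
Proof. by rewrite is_revert_ctriP; exact: ctri_revert_cubic_crtP. Qed.

(** * Robbins numbers *)

Lemma fact_prod3 k : (3 * k).+1`!%:R = 3 ^+ k * k`!%:R * prod3 2 k * prod3 4 k.
Proof.
elim: k => [|k IH]; first by rewrite /prod3 !big_ord0 !mulr1.
have -> : (3 * k.+1).+1 = (3 * k).+4 by lia.
rewrite (factS (3 * k).+3) (factS (3 * k).+2) (factS (3 * k).+1) 3!natrM IH.
by rewrite factS natrM exprS !prod3S; ring.
Qed.

Definition robbins_ratio (k : nat) : rat :=
  (3 * k).+1`!%:R * k`!%:R / ((k + k)`!%:R * (k + k).+1`!%:R).

Lemma robbinsS m : robbins m.+1 = robbins m * robbins_ratio m.
Proof.
have shift : m`!%:R * \prod_(k < m) (m.+1 + k)`!%:R =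
             \prod_(k < m) (m + k)`!%:R * (m + m)`!%:R :> rat.
  transitivity (\prod_(k < m.+1) (m + k)`!%:R : rat); last by rewrite big_ord_recr.
  rewrite big_ord_recl addn0; congr (_ * _).
  by apply: eq_bigr => k _; rewrite addSnnS.
have den_neq0 n : \prod_(k < m) (n + k)`!%:R != 0 :> rat.
  by rewrite prodf_seq_neq0; apply/allP => k _; rewrite natr_fact_neq0.
rewrite /robbins /robbins_ratio !prodf_div !big_ord_recr /= addSn.
move: shift (den_neq0 m) (den_neq0 m.+1).
set D := \prod_(k < m) (m + k)`!%:R; set D' := \prod_(k < m) (m.+1 + k)`!%:R.
move=> shift ? ?; have -> : D' = D * (m + m)`!%:R / m`!%:R.
  by rewrite -shift; field; field_side_neq0.
by field; field_side_neq0.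
Qed.

Lemma prod_robbins_ratio n :
  \prod_(k < n) (3 ^+ k * robbins_ratio k) = 3 ^+ 'C(n, 2) * robbins n.
Proof.
elim: n => [|n IH]; first by rewrite big_ord0 /robbins big_ord0 mulr1.
by rewrite big_ord_recr IH robbinsS binS bin1 exprD /=; ring.
Qed.

(** * The Hankel determinants of crt *)

Definition orth_coef (k i : nat) : rat :=
  'C(k, i)%:R * (k + i)`!%:R / (k`!%:R * 3 ^+ i * prod3 2 i).

Lemma orth_coef_small k i : (k < i)%N -> orth_coef k i = 0.
Proof. by move=> lt_ki; rewrite /orth_coef bin_small // !mul0r. Qed.

Lemma orth_coef_predl k i :
  orth_coef k i = (k.+1 - i)%:R * orth_coef k.+1 i / (k.+1 + i)%:R.
Proof.
have bin_down : (k.+1 - i)%:R * 'C(k.+1, i)%:R = k.+1%:R * 'C(k, i)%:R :> rat.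
  by rewrite -!natrM -mul_bin_down.
rewrite /orth_coef !mulrA bin_down addSn factS (factS k) !natrM.
by have := ler0n rat k; have := ler0n rat i => ? ?; field; field_side_neq0.
Qed.

Lemma orth_coef_succr k i : orth_coef k.+1 i.+1 =
  (k.+1 - i)%:R * (k.+2 + i)%:R * orth_coef k.+1 i / (i.+1%:R * (3 * (3 * i + 2)%:R)).
Proof.
have bin_left : i.+1%:R * 'C(k.+1, i.+1)%:R = (k.+1 - i)%:R * 'C(k.+1, i)%:R :> rat.
  by rewrite -!natrM mul_bin_left.
have := ler0n rat k; have := ler0n rat i => ? ?.
rewrite /orth_coef addnS factS natrM exprS prod3S -addSn.
have -> : 'C(k.+1, i.+1)%:R = (k.+1 - i)%:R * 'C(k.+1, i)%:R / i.+1%:R :> rat.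
  by rewrite -bin_left; field; field_side_neq0.
by field; field_side_neq0.
Qed.

Definition orth_moment (k j : nat) : rat := \sum_(i < k.+1) orth_coef k i * crt (i + j)%N.

Lemma orth_moment_widen k j N : (k < N)%N ->
  \sum_(i < N) orth_coef k i * crt (i + j)%N = orth_moment k j.
Proof.
move=> lt_kN; rewrite /orth_moment.
rewrite (big_ord_widen N (fun i => orth_coef k i * crt (i + j)%N) lt_kN).
rewrite [RHS]big_mkcond; apply: eq_bigr => -[i /= _] _; case: ltnP => // lt_ki.
by rewrite orth_coef_small ?mul0r.
Qed.

(* Certificate of the WZ pair behind [orth_moment_rec], found by Zeilberger's algorithm. *)
Definition orth_wz_cert (k j i : nat) : rat :=
  - (2 * (i + j).+1%:R * i%:R * (3 * i%:R - 1)) / (i + k).+1%:R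
  * orth_coef k.+1 i * crt (i + j)%N.

Lemma orth_wz_step k j i :
  (3 * k + 2)%:R * (j + k + 2)%:R * orth_coef k.+1 i * crt (i + j)%N +
  (j%:R - k%:R) * (3 * k + 4)%:R * orth_coef k i * crt (i + j)%N =
  orth_wz_cert k j i.+1 - orth_wz_cert k j i.
Proof.
rewrite /orth_wz_cert; case: (leqP i k.+1) => [le_ik | lt_ki].
  have := ler0n rat k; have := ler0n rat i; have := ler0n rat j => ? ? ?.
  rewrite (orth_coef_predl k i) (orth_coef_succr k i) addSn (crtS (i + j)) natrB //.
  by field; field_side_neq0.
by rewrite !orth_coef_small ?mulr0 ?mul0r ?subrr ?addr0 //; lia.
Qed.

Lemma orth_moment_rec k j :
  (3 * k + 2)%:R * (j + k + 2)%:R * orth_moment k.+1 j +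
  (j%:R - k%:R) * (3 * k + 4)%:R * orth_moment k j = 0.
Proof.
rewrite -(orth_moment_widen j (ltnSn k.+1)) -(orth_moment_widen j (ltnW (ltnSn k.+1))).
rewrite !mulr_sumr -big_split /=.
transitivity (\sum_(i < k.+2) (orth_wz_cert k j i.+1 - orth_wz_cert k j i)).
  by apply: eq_bigr => i _; rewrite -orth_wz_step; ring.
rewrite -(big_mkord xpredT (fun i => orth_wz_cert k j i.+1 - orth_wz_cert k j i)).
rewrite telescope_sumr // /orth_wz_cert orth_coef_small //.
by rewrite !mulr0 mul0r oppr0 !mul0r subrr.
Qed.

Lemma orth_momentE k j : orth_moment k j =
  crt j * (-1) ^+ k * (j ^_ k)%:R * prod3 4 k * j.+1`!%:R / (prod3 2 k * (j + k).+1`!%:R).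
Proof.
elim: k => [|k IH].
  rewrite /orth_moment big_ord1 /orth_coef /prod3 !big_ord0 /= !addn0 add0n bin0 ffactn0 fact0.
  by field; field_side_neq0.
have := ler0n rat k; have := ler0n rat j => ? ?.
have -> : orth_moment k.+1 j = - ((j%:R - k%:R) * (3 * k + 4)%:R) * orth_moment k j /
                               ((3 * k + 2)%:R * (j + k + 2)%:R).
  apply/eqP; rewrite -subr_eq0; apply/eqP.
  transitivity (((3 * k + 2)%:R * (j + k + 2)%:R * orth_moment k.+1 j +
    (j%:R - k%:R) * (3 * k + 4)%:R * orth_moment k j) / ((3 * k + 2)%:R * (j + k + 2)%:R)).
    by field; field_side_neq0.
  by rewrite orth_moment_rec mul0r.
rewrite IH ffactnSr !prod3S exprS (addnS j k) (factS (j + k).+1) (natrM _ (j + k).+2).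
case: (leqP k j) => [le_kj | lt_jk].
  by rewrite (natrM _ (j ^_ k)) natrB //; field; field_side_neq0.
by rewrite ffact_small // mul0n; field; field_side_neq0.
Qed.

Lemma orth_moment_small k j : (j < k)%N -> orth_moment k j = 0.
Proof. by move=> lt_jk; rewrite orth_momentE ffact_small // !(mulr0, mul0r). Qed.

Lemma orth_moment_diag k : orth_moment k k = 3 ^+ k * robbins_ratio k * orth_coef k k.
Proof.
rewrite orth_momentE /crt /robbins_ratio /orth_coef ffactnn binn fact_prod3.
have -> : (-3 : rat) ^+ k = (-1) ^+ k * 3 ^+ k by rewrite -exprMn mulN1r.
have sq_sign : ((-1) ^+ k * (-1) ^+ k : rat) = 1 by rewrite -exprMn mulrNN mulr1 expr1n.
transitivity (((-1) ^+ k * (-1) ^+ k) * 3 ^+ k * k`!%:R * prod3 4 k / (k + k).+1`!%:R).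
  by field; field_side_neq0.
by rewrite sq_sign; field; field_side_neq0.
Qed.

Lemma det_hankel_crt n : \det (hankel_mx crt n) = 3 ^+ 'C(n.+1, 2) * robbins n.+1.
Proof.
pose Q : 'M[rat]_n.+1 := \matrix_(k, i) orth_coef k i.
pose M : 'M[rat]_n.+1 := \matrix_(k, j) orth_moment k j.
have QH : Q *m hankel_mx crt n = M.
  apply/matrixP => k j; rewrite !mxE -(orth_moment_widen j (ltn_ord k)).
  by apply: eq_bigr => i _; rewrite !mxE.
have detQ : \det Q = \prod_(k < n.+1) orth_coef k k.
  rewrite det_trig; first by apply: eq_bigr => k _; rewrite mxE.
  by apply/is_trig_mxP => k i lt_ki; rewrite mxE orth_coef_small.
have detM : \det M = \prod_(k < n.+1) (3 ^+ k * robbins_ratio k) * \det Q.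
  rewrite -det_tr det_trig; last by apply/is_trig_mxP => j k lt_jk; rewrite !mxE orth_moment_small.
  by rewrite detQ -big_split; apply: eq_bigr => k _; rewrite !mxE orth_moment_diag.
have detQ_neq0 : \det Q != 0.
  rewrite detQ prodf_seq_neq0; apply/allP => k _.
  by rewrite /orth_coef binn !(mulf_neq0, invr_neq0, natr_fact_neq0, expf_neq0, prod3_neq0).
by move: detM; rewrite -QH det_mulmx mulrC prod_robbins_ratio => /(mulIf detQ_neq0).
Qed.

Theorem mainTheorem6 :
  (exists b : nat -> rat, is_revert ctri b) /\
  forall b : nat -> rat, is_revert ctri b ->
    forall n : nat, hankel b n / 3 ^+ 'C(n.+1, 2) = robbins n.+1.
Proof.
split.
  exists (crt * fps_comp (- (fpsX * crt)) fps_geom); apply/is_revert_ctri_crtP.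
  have := @fps_geom_mul_1sub _ (- (fpsX * crt)); rewrite opprK fps_coefN fps_coefXM oppr0.
  by move=> /(_ erefl) geom_inv; rewrite -mulrA geom_inv mulr1.
move=> b /is_revert_ctri_crtP b_fix n.
have -> : hankel b n = \det (hankel_mx b n) by [].
rewrite (det_hankel_mx_invariant n b_fix).
by rewrite det_hankel_crt mulrC mulKf // expf_neq0.
Qed.
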